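(* Let $d>1$ be an integer and $\mu>0$ an integer. For every relation $R\in\{\le,<,\ge,>,=,\neq\}$ there is a B\''uchi automaton over $\{0,\dots,\mu\}\times\{0,\dots,\mu\}$ accepting a pair $(A,B)$ of sequences in $\{0,\dots,\mu\}^\omega$ (read synchronously) if and only if $\mathrm{DS}(A,d)\,R\,\mathrm{DS}(B,d)$; i.e. the discounted-sum comparator for integer discount factors is $\omega$-regular for all relations.
   Context: $\mathrm{DS}(A,d)=\sum_{i\ge0}A[i]/d^i$. *)

From Stdlib Require Import Reals List ClassicalEpsilon.
Open Scope R_scope.

Definition digit (mu : nat) : Type := { n : nat | (n <= mu)%nat }.

Record Buchi (Sigma : Type) : Type := mkBuchi {
  bstate : Type;
  bstate_finite : exists l : list bstate, forall q : bstate, In q l;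
  binit : bstate -> Prop;
  bdelta : bstate -> Sigma -> bstate -> Prop;
  bacc : bstate -> Prop
}.
Arguments bstate {Sigma}.
Arguments binit {Sigma}.
Arguments bdelta {Sigma}.
Arguments bacc {Sigma}.

Definition buchi_accepts {Sigma : Type} (M : Buchi Sigma) (w : nat -> Sigma) : Prop :=
  exists rho : nat -> bstate M,
    binit M (rho 0%nat) /\
    (forall i : nat, bdelta M (rho i) (w i) (rho (S i))) /\
    (forall n : nat, exists m : nat, (n <= m)%nat /\ bacc M (rho m)).

Definition DS {mu : nat} (A : nat -> digit mu) (d : nat) : R :=
  epsilon (inhabits 0)
    (fun l => infinite_sum (fun i => INR (proj1_sig (A i)) / (INR d) ^ i) l).

Inductive cmp_rel : Type := RLe | RLt | RGe | RGt | REq | RNeq.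

Definition cmp_interp (r : cmp_rel) (x y : R) : Prop :=
  match r with
  | RLe => x <= y
  | RLt => x < y
  | RGe => x >= y
  | RGt => x > y
  | REq => x = y
  | RNeq => x <> y
  end.

From Stdlib Require Import Reals List ClassicalEpsilon.
From Stdlib Require Import Lra Lia ZArith FunctionalExtensionality ProofIrrelevance.
Open Scope R_scope.

(* Feed the automaton the digit differences c_i = A[i] - B[i] (|c_i| <= mu)
   and let it track the integer "Horner value"
       S_n = sum_{i<n} c_i d^(n-1-i),     S_(n+1) = d S_n + c_n,
   which is d^(n-1) times the n-th partial sum of DS(A,d) - DS(B,d).
   The geometric bound on the tail of the series gives
       |d^n (DS(A,d) - DS(B,d)) - S_(n+1)| <= mu / (d - 1).
   Hence for any threshold K >= 0 with mu < (d-1)(K+1):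
   - once S_n >= K+1 it stays there forever, and DS(A,d) > DS(B,d);
   - symmetrically for S_n <= -(K+1);
   - if |S_n| <= K for all n, then DS(A,d) = DS(B,d).
   So clamping S_n to [-(K+1), K+1] yields a finite deterministic automaton
   whose state eventually reports the sign of DS(A,d) - DS(B,d); a Buchi
   condition "the reported sign satisfies R infinitely often" then decides
   every relation R.  We take K = mu. *)

Lemma sig_enumerable {T : Type} (P : T -> Prop) (l : list T) :
  (forall x, P x -> In x l) -> exists l' : list {x | P x}, forall q, In q l'.
Proof.
  intro hl.
  assert (cover : forall l0 : list T, exists l' : list {x | P x},
             forall q, In (proj1_sig q) l0 -> In q l').
  { induction l0 as [|x l0 [l' hl']].
    - exists nil. intros q [].
    - destruct (classic (P x)) as [px|npx].
      + exists (exist P x px :: l'). intros [y py] [e|hy]; simpl in *.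
        * subst y. left. f_equal. apply proof_irrelevance.
        * right. exact (hl' (exist P y py) hy).
      + exists l'. intros [y py] [e|hy]; simpl in *.
        * subst y. contradiction.
        * exact (hl' (exist P y py) hy). }
  destruct (cover l) as [l' hl']. exists l'. intro q. apply hl', hl, proj2_sig.
Qed.

Lemma Z_interval_enumerable (a b : Z) :
  exists l : list {z : Z | (a <= z <= b)%Z}, forall q, In q l.
Proof.
  apply (sig_enumerable _ (map (fun k => a + Z.of_nat k)%Z (seq 0 (Z.to_nat (b - a + 1))))).
  intros z hz. apply in_map_iff. exists (Z.to_nat (z - a)).
  split; [lia | apply in_seq; lia].
Qed.

Lemma pow_unbounded (r C : R) : 1 < r -> exists n, C < r ^ n.
Proof.
  intro hr. destruct (Pow_x_infinity r) with (b := C + 1) as [N hN].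
  - rewrite Rabs_right; lra.
  - exists N. specialize (hN N (le_n _)).
    rewrite Rabs_right in hN; [lra | apply Rle_ge, pow_le; lra].
Qed.

Lemma zero_of_pow_bounded (x r C : R) :
  1 < r -> (forall n, Rabs (x * r ^ n) <= C) -> x = 0.
Proof.
  intros hr hb. destruct (Req_dec x 0) as [|hx]; [assumption|]. exfalso.
  assert (hax : 0 < Rabs x) by (apply Rabs_pos_lt; exact hx).
  destruct (pow_unbounded r (C / Rabs x) hr) as [n hn].
  specialize (hb n). rewrite Rabs_mult, (Rabs_right (r ^ n)) in hb
    by (apply Rle_ge, pow_le; lra).
  apply (Rmult_lt_compat_l (Rabs x)) in hn; [|exact hax].
  replace (Rabs x * (C / Rabs x)) with C in hn by (field; lra). lra.
Qed.

Lemma cv_abs_bound (u : nat -> R) (l a E : R) (N : nat) :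
  Un_cv u l -> (forall k, (N <= k)%nat -> Rabs (u k - a) <= E) -> Rabs (l - a) <= E.
Proof.
  intros hu hb. apply Rnot_lt_le. intro hlt.
  destruct (hu (Rabs (l - a) - E)) as [N' hN']; [lra|].
  specialize (hN' (max N N') (Nat.le_max_r _ _)). unfold Rdist in hN'.
  specialize (hb (max N N') (Nat.le_max_l _ _)).
  pose proof (Rabs_triang (l - u (max N N')) (u (max N N') - a)) as htri.
  replace (l - u (max N N') + (u (max N N') - a)) with (l - a) in htri by ring.
  rewrite <- Rabs_Ropp in hN'. replace (- (u (max N N') - l)) with (l - u (max N N')) in hN' by ring.
  lra.
Qed.

Lemma infinite_sum_minus (f g : nat -> R) (lf lg : R) :
  infinite_sum f lf -> infinite_sum g lg -> infinite_sum (fun i => f i - g i) (lf - lg).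
Proof.
  intros hf hg eps heps.
  destruct (CV_minus _ _ _ _ hf hg eps heps) as [N hN].
  exists N. intros n hn. rewrite minus_sum. exact (hN n hn).
Qed.

Section Horner.

Variable d : Z.
Hypothesis hd : (1 < d)%Z.
Variable m : Z.
Variable c : nat -> Z.
Hypothesis hc : forall i, (Z.abs (c i) <= m)%Z.

Let dr := IZR d.

Fixpoint horner (n : nat) : Z :=
  match n with
  | O => 0%Z
  | S k => (d * horner k + c k)%Z
  end.

Definition term (i : nat) : R := IZR (c i) / dr ^ i.

Lemma dr_gt1 : 1 < dr.
Proof. apply IZR_lt. exact hd. Qed.

Lemma m_nonneg : 0 <= IZR m.
Proof. apply IZR_le. specialize (hc 0%nat). lia. Qed.

Lemma partial_sum_horner (n : nat) :
  sum_f_R0 term n * dr ^ n = IZR (horner (S n)).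
Proof.
  pose proof dr_gt1 as h1.
  assert (hp : forall k, dr ^ k <> 0) by (intro k; apply pow_nonzero; lra).
  induction n as [|n IH].
  - unfold term. simpl. rewrite plus_IZR, mult_IZR. field.
  - cbn [sum_f_R0]. change (horner (S (S n))) with (d * horner (S n) + c (S n))%Z.
    rewrite plus_IZR, mult_IZR, <- IH. unfold term. fold dr. simpl. field. split; [apply hp | lra].
Qed.

Lemma horner_drift (n k : nat) :
  (dr - 1) * Rabs (IZR (horner (k + n)) - dr ^ k * IZR (horner n)) <= IZR m * (dr ^ k - 1).
Proof.
  pose proof dr_gt1. pose proof m_nonneg.
  induction k as [|k IH]; simpl.
  - replace (IZR (horner n) - 1 * IZR (horner n)) with 0 by ring.
    rewrite Rabs_R0. lra.
  - set (X := IZR (horner (k + n)) - dr ^ k * IZR (horner n)) in IH.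
    assert (hck : Rabs (IZR (c (k + n)%nat)) <= IZR m)
      by (rewrite <- abs_IZR; apply IZR_le, hc).
    rewrite plus_IZR, mult_IZR. fold dr.
    replace (dr * IZR (horner (k + n)) + IZR (c (k + n)%nat) - dr * dr ^ k * IZR (horner n))
      with (dr * X + IZR (c (k + n)%nat)) by (unfold X; ring).
    pose proof (Rabs_triang (dr * X) (IZR (c (k + n)%nat))) as htri.
    rewrite Rabs_mult, (Rabs_right dr) in htri by lra.
    nra.
Qed.

Lemma partial_sum_cauchy (n k : nat) :
  (dr - 1) * dr ^ n * Rabs (sum_f_R0 term (k + n) - sum_f_R0 term n) <= IZR m.
Proof.
  pose proof dr_gt1. pose proof m_nonneg.
  assert (hQ : 1 <= dr ^ k) by (apply pow_R1_Rle; lra).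
  assert (hP : 0 < dr ^ n) by (apply pow_lt; lra).
  assert (scaled : dr ^ k * dr ^ n * (sum_f_R0 term (k + n) - sum_f_R0 term n)
                   = IZR (horner (k + S n)) - dr ^ k * IZR (horner (S n))).
  { replace (k + S n)%nat with (S (k + n)) by lia.
    rewrite <- !partial_sum_horner, pow_add. ring. }
  pose proof (horner_drift (S n) k) as hdrift.
  rewrite <- scaled, Rabs_mult, (Rabs_right (dr ^ k * dr ^ n)) in hdrift
    by (apply Rle_ge, Rmult_le_pos; lra).
  nra.
Qed.

Lemma series_converges : exists l, infinite_sum term l.
Proof.
  pose proof dr_gt1. pose proof m_nonneg.
  destruct (R_complete (fun N => sum_f_R0 term N)) as [l hl].
  - intros eps heps.
    destruct (pow_unbounded dr (2 * IZR m / ((dr - 1) * eps)) dr_gt1) as [N hN].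
    assert (hP : 0 < dr ^ N) by (apply pow_lt; lra).
    assert (near : forall j, (N <= j)%nat ->
               Rabs (sum_f_R0 term j - sum_f_R0 term N) < eps / 2).
    { intros j hj. pose proof (partial_sum_cauchy N (j - N)) as hc'.
      replace (j - N + N)%nat with j in hc' by lia.
      apply (Rmult_lt_compat_l ((dr - 1) * eps)) in hN; [|nra].
      replace ((dr - 1) * eps * (2 * IZR m / ((dr - 1) * eps))) with (2 * IZR m)
        in hN by (field; lra).
      nra. }
    exists N. intros a b ha hb. unfold Rdist.
    pose proof (near a ha). pose proof (near b hb).
    pose proof (Rabs_triang (sum_f_R0 term a - sum_f_R0 term N)
                            (- (sum_f_R0 term b - sum_f_R0 term N))) as htri.
    rewrite Rabs_Ropp in htri.
    replace (sum_f_R0 term a - sum_f_R0 term N + - (sum_f_R0 term b - sum_f_R0 term N))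
      with (sum_f_R0 term a - sum_f_R0 term b) in htri by ring.
    lra.
  - exists l. exact hl.
Qed.

Lemma series_tail (l : R) (n : nat) :
  infinite_sum term l -> Rabs (dr ^ n * l - IZR (horner (S n))) <= IZR m / (dr - 1).
Proof.
  intro hl. pose proof dr_gt1.
  assert (hP : 0 < dr ^ n) by (apply pow_lt; lra).
  assert (hball : Rabs (l - sum_f_R0 term n) <= IZR m / ((dr - 1) * dr ^ n)).
  { apply (cv_abs_bound (fun N => sum_f_R0 term N) l _ _ n hl).
    intros k hk. pose proof (partial_sum_cauchy n (k - n)) as hc'.
    replace (k - n + n)%nat with k in hc' by lia.
    apply (Rmult_le_reg_l ((dr - 1) * dr ^ n)); [nra|].
    replace ((dr - 1) * dr ^ n * (IZR m / ((dr - 1) * dr ^ n))) with (IZR m)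
      by (field; lra).
    exact hc'. }
  rewrite <- partial_sum_horner.
  replace (dr ^ n * l - sum_f_R0 term n * dr ^ n) with (dr ^ n * (l - sum_f_R0 term n)) by ring.
  rewrite Rabs_mult, (Rabs_right (dr ^ n)) by lra.
  apply (Rmult_le_compat_l (dr ^ n)) in hball; [|lra].
  replace (dr ^ n * (IZR m / ((dr - 1) * dr ^ n))) with (IZR m / (dr - 1)) in hball
    by (field; lra).
  exact hball.
Qed.

End Horner.

Section Sign.

Variables d K m : Z.
Hypothesis hd : (1 < d)%Z.
Hypothesis hKm : (m < (d - 1) * (K + 1))%Z.
Variable c : nat -> Z.
Hypothesis hc : forall i, (Z.abs (c i) <= m)%Z.
Variable D : R.
Hypothesis tail :
  forall n, Rabs (IZR d ^ n * D - IZR (horner d c (S n))) <= IZR m / (IZR d - 1).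

Lemma horner_absorbing (n k : nat) :
  (n <= k)%nat -> (K + 1 <= horner d c n)%Z -> (K + 1 <= horner d c k)%Z.
Proof.
  intros hnk hn. induction hnk as [|k _ IH]; [exact hn|].
  simpl. specialize (hc k). nia.
Qed.

Lemma threshold_real : IZR m / (IZR d - 1) < IZR K + 1.
Proof.
  assert (h1 : 1 < IZR d) by (apply IZR_lt; exact hd).
  apply (Rmult_lt_reg_l (IZR d - 1)); [lra|].
  replace ((IZR d - 1) * (IZR m / (IZR d - 1))) with (IZR m) by (field; lra).
  replace (IZR d - 1) with (IZR (d - 1)) by (rewrite minus_IZR; reflexivity).
  replace (IZR K + 1) with (IZR (K + 1)) by (rewrite plus_IZR; reflexivity).
  rewrite <- mult_IZR. apply IZR_lt. exact hKm.
Qed.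

Lemma positive_of_exceeds (n : nat) : (K + 1 <= horner d c n)%Z -> 0 < D.
Proof.
  intro hn. pose proof (horner_absorbing n (S n) (le_S _ _ (le_n n)) hn) as hSn.
  apply IZR_le in hSn. rewrite plus_IZR in hSn.
  pose proof threshold_real. specialize (tail n).
  pose proof (Rle_abs (- (IZR d ^ n * D - IZR (horner d c (S n))))) as hneg.
  rewrite Rabs_Ropp in hneg.
  assert (hP : 0 < IZR d ^ n) by (apply pow_lt, IZR_lt; lia).
  nra.
Qed.

Lemma zero_of_bounded : (forall n, (Z.abs (horner d c n) <= K)%Z) -> D = 0.
Proof.
  intro hb. apply (zero_of_pow_bounded D (IZR d) (IZR m / (IZR d - 1) + IZR K)).
  - apply IZR_lt. exact hd.
  - intro n. specialize (tail n).
    assert (hH : Rabs (IZR (horner d c (S n))) <= IZR K)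
      by (rewrite <- abs_IZR; apply IZR_le, hb).
    pose proof (Rabs_triang (IZR d ^ n * D - IZR (horner d c (S n)))
                            (IZR (horner d c (S n)))) as htri.
    replace (IZR d ^ n * D - IZR (horner d c (S n)) + IZR (horner d c (S n)))
      with (D * IZR d ^ n) in htri by ring.
    lra.
Qed.

End Sign.

Lemma horner_opp (d : Z) (c : nat -> Z) (n : nat) :
  horner d (fun i => - c i)%Z n = (- horner d c n)%Z.
Proof. induction n as [|n IH]; simpl; [reflexivity | rewrite IH; ring]. Qed.

(* The mirror images of the threshold lemmas, obtained by negating c and D. *)
Section Mirror.

Variables d K m : Z.
Hypothesis hd : (1 < d)%Z.
Hypothesis hKm : (m < (d - 1) * (K + 1))%Z.
Variable c : nat -> Z.
Hypothesis hc : forall i, (Z.abs (c i) <= m)%Z.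
Variable D : R.
Hypothesis tail :
  forall n, Rabs (IZR d ^ n * D - IZR (horner d c (S n))) <= IZR m / (IZR d - 1).

Lemma hc_opp : forall i, (Z.abs (- c i) <= m)%Z.
Proof. intro i. rewrite Z.abs_opp. apply hc. Qed.

Lemma horner_absorbing_neg (n k : nat) :
  (n <= k)%nat -> (horner d c n <= -(K + 1))%Z -> (horner d c k <= -(K + 1))%Z.
Proof.
  intros hnk hn.
  pose proof (horner_absorbing d K m hd hKm (fun i => - c i)%Z hc_opp n k hnk) as h.
  rewrite !horner_opp in h. lia.
Qed.

Lemma negative_of_exceeds (n : nat) : (horner d c n <= -(K + 1))%Z -> D < 0.
Proof.
  intro hn. enough (0 < - D) by lra.
  apply (positive_of_exceeds d K m hd hKm (fun i => - c i)%Z hc_opp (- D)) with n.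
  - intro k. rewrite horner_opp, opp_IZR.
    replace (IZR d ^ k * - D - - IZR (horner d c (S k)))
      with (- (IZR d ^ k * D - IZR (horner d c (S k)))) by ring.
    rewrite Rabs_Ropp. apply tail.
  - rewrite horner_opp. lia.
Qed.

End Mirror.

Definition clamp (K z : Z) : Z := Z.max (-(K + 1)) (Z.min (K + 1) z).

Definition verdict (K z : Z) : Z :=
  if Z.eqb z (K + 1) then 1%Z else if Z.eqb z (-(K + 1)) then (-1)%Z else 0%Z.

Definition same_sign (x y : R) : Prop := (0 < x <-> 0 < y) /\ (x < 0 <-> y < 0).

Section Verdict.

Variable K : Z.
Hypothesis hK : (0 <= K)%Z.

Lemma clamp_range (z : Z) : (-(K + 1) <= clamp K z <= K + 1)%Z.
Proof. unfold clamp. lia. Qed.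

Lemma verdict_clamp_pos (z : Z) : (K + 1 <= z)%Z -> verdict K (clamp K z) = 1%Z.
Proof.
  intro hz. unfold verdict, clamp.
  replace (Z.max (- (K + 1)) (Z.min (K + 1) z)) with (K + 1)%Z by lia.
  now rewrite Z.eqb_refl.
Qed.

Lemma verdict_clamp_neg (z : Z) : (z <= -(K + 1))%Z -> verdict K (clamp K z) = (-1)%Z.
Proof.
  intro hz. unfold verdict, clamp.
  replace (Z.max (- (K + 1)) (Z.min (K + 1) z)) with (-(K + 1))%Z by lia.
  destruct (Z.eqb_spec (-(K + 1)) (K + 1)); [lia|]. now rewrite Z.eqb_refl.
Qed.

Lemma verdict_clamp_mid (z : Z) : (Z.abs z <= K)%Z -> verdict K (clamp K z) = 0%Z.
Proof.
  intro hz. unfold verdict, clamp.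
  replace (Z.max (- (K + 1)) (Z.min (K + 1) z)) with z by lia.
  destruct (Z.eqb_spec z (K + 1)); [lia|]. destruct (Z.eqb_spec z (-(K + 1))); [lia|].
  reflexivity.
Qed.

End Verdict.

Section Clamp.

Variables d K m : Z.
Hypothesis hd : (1 < d)%Z.
Hypothesis hK : (0 <= K)%Z.
Hypothesis hKm : (m < (d - 1) * (K + 1))%Z.

(* Clamping commutes with a Horner step: the saturated ends are absorbing,
   so the automaton may forget how far beyond the threshold it is. *)
Lemma clamp_step (s a : Z) :
  (Z.abs a <= m)%Z -> clamp K (d * clamp K s + a) = clamp K (d * s + a).
Proof.
  intro ha. unfold clamp.
  destruct (Z_le_gt_dec (K + 1) s) as [hs|hs].
  - replace (Z.max (- (K + 1)) (Z.min (K + 1) s)) with (K + 1)%Z by lia.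
    assert (d * (K + 1) <= d * s)%Z by nia. nia.
  - destruct (Z_le_gt_dec s (-(K + 1))) as [hs'|hs'].
    + replace (Z.max (- (K + 1)) (Z.min (K + 1) s)) with (-(K + 1))%Z by lia.
      assert (d * s <= d * (-(K + 1)))%Z by nia. nia.
    + replace (Z.max (- (K + 1)) (Z.min (K + 1) s)) with s by lia. reflexivity.
Qed.

Variable c : nat -> Z.
Hypothesis hc : forall i, (Z.abs (c i) <= m)%Z.
Variable D : R.
Hypothesis tail :
  forall n, Rabs (IZR d ^ n * D - IZR (horner d c (S n))) <= IZR m / (IZR d - 1).

Lemma eventual_verdict :
  exists N, forall k, (N <= k)%nat -> same_sign (IZR (verdict K (clamp K (horner d c k)))) D.
Proof.
  destruct (classic (exists n, (K + 1 <= horner d c n)%Z)) as [[n hn]|hpos].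
  - pose proof (positive_of_exceeds d K m hd hKm c hc D tail n hn).
    exists n. intros k hk.
    rewrite (verdict_clamp_pos K hK) by exact (horner_absorbing d K m hd hKm c hc n k hk hn).
    unfold same_sign. lra.
  - destruct (classic (exists n, (horner d c n <= -(K + 1))%Z)) as [[n hn]|hneg].
    + pose proof (negative_of_exceeds d K m hd hKm c hc D tail n hn).
      exists n. intros k hk.
      rewrite (verdict_clamp_neg K hK) by exact (horner_absorbing_neg d K m hd hKm c hc n k hk hn).
      unfold same_sign. lra.
    + assert (hmid : forall n, (Z.abs (horner d c n) <= K)%Z).
      { intro n. assert (~ (K + 1 <= horner d c n)%Z) by (intro; apply hpos; eauto).
        assert (~ (horner d c n <= -(K + 1))%Z) by (intro; apply hneg; eauto). lia. }
      rewrite (zero_of_bounded d K m hd c D tail hmid).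
      exists 0%nat. intros k _. rewrite (verdict_clamp_mid K hK) by apply hmid.
      unfold same_sign. lra.
Qed.

End Clamp.

Lemma cmp_interp_same_sign (r : cmp_rel) (x y : R) :
  same_sign x y -> (cmp_interp r x 0 <-> cmp_interp r y 0).
Proof.
  intros [hp hn].
  destruct (Rtotal_order x 0) as [hx|[hx|hx]].
  - assert (y < 0) by (apply hn, hx). destruct r; simpl; split; intros; lra.
  - assert (y = 0).
    { destruct (Rtotal_order y 0) as [hy|[hy|hy]]; [apply hn in hy | | apply hp in hy]; lra. }
    destruct r; simpl; split; intros; lra.
  - assert (0 < y) by (apply hp, hx). destruct r; simpl; split; intros; lra.
Qed.

Lemma cmp_interp_sub (r : cmp_rel) (x y : R) :
  cmp_interp r x y <-> cmp_interp r (x - y) 0.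
Proof. destruct r; simpl; split; intros; lra. Qed.

Lemma infinitely_often_eventual (P : nat -> Prop) (Q : Prop) :
  (exists N, forall k, (N <= k)%nat -> (P k <-> Q)) ->
  ((forall n, exists k, (n <= k)%nat /\ P k) <-> Q).
Proof.
  intros [N hN]. split.
  - intro hio. destruct (hio N) as [k [hk hP]]. exact (proj1 (hN k hk) hP).
  - intros hQ n. exists (max n N). split; [lia|]. apply (hN _ (Nat.le_max_r _ _)), hQ.
Qed.

Definition letter_diff {mu : nat} (ab : digit mu * digit mu) : Z :=
  (Z.of_nat (proj1_sig (fst ab)) - Z.of_nat (proj1_sig (snd ab)))%Z.

Lemma letter_diff_bound {mu : nat} (ab : digit mu * digit mu) :
  (Z.abs (letter_diff ab) <= Z.of_nat mu)%Z.
Proof. destruct ab as [[a ha] [b hb]]. unfold letter_diff. simpl. lia. Qed.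

Definition cstate (K : Z) : Type := {z : Z | (-(K + 1) <= z <= K + 1)%Z}.

Definition comparator (d mu : nat) (r : cmp_rel) : Buchi (digit mu * digit mu) :=
  {| bstate := cstate (Z.of_nat mu);
     bstate_finite := Z_interval_enumerable _ _;
     binit := fun q => proj1_sig q = 0%Z;
     bdelta := fun q ab q' =>
       proj1_sig q' = clamp (Z.of_nat mu) (Z.of_nat d * proj1_sig q + letter_diff ab);
     bacc := fun q => cmp_interp r (IZR (verdict (Z.of_nat mu) (proj1_sig q))) 0 |}.

(* The comparator is deterministic: its unique run on w visits the clamped
   Horner values of the digit differences of w. *)
Lemma comparator_accepts (d mu : nat) (r : cmp_rel) (w : nat -> digit mu * digit mu) :
  (1 < d)%nat ->
  (buchi_accepts (comparator d mu r) w <->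
   forall n, exists k, (n <= k)%nat /\
     cmp_interp r (IZR (verdict (Z.of_nat mu)
       (clamp (Z.of_nat mu) (horner (Z.of_nat d) (fun i => letter_diff (w i)) k)))) 0).
Proof.
  intro hd. set (K := Z.of_nat mu). set (c := fun i => letter_diff (w i)).
  assert (hKm : (K < (Z.of_nat d - 1) * (K + 1))%Z) by (unfold K; nia).
  assert (hclamp0 : clamp K 0 = 0%Z) by (unfold clamp, K; lia).
  split.
  - intros [rho [hinit [hstep hacc]]].
    assert (hrun : forall k, proj1_sig (rho k) = clamp K (horner (Z.of_nat d) c k)).
    { induction k as [|k IH]; [simpl; rewrite hinit; symmetry; exact hclamp0|].
      rewrite (hstep k), IH. simpl.
      apply (clamp_step (Z.of_nat d) K K ltac:(lia) ltac:(lia) hKm), letter_diff_bound. }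
    intro n. destruct (hacc n) as [k [hk hak]]. exists k. split; [exact hk|].
    simpl in hak. rewrite hrun in hak. exact hak.
  - intro hio.
    exists (fun k => exist _ (clamp K (horner (Z.of_nat d) c k))
                         (clamp_range K ltac:(lia) _) : cstate K).
    split; [|split].
    + exact hclamp0.
    + intro k. simpl. symmetry.
      apply (clamp_step (Z.of_nat d) K K ltac:(lia) ltac:(lia) hKm), letter_diff_bound.
    + exact hio.
Qed.

Definition digit_seq {mu : nat} (A : nat -> digit mu) (i : nat) : Z :=
  Z.of_nat (proj1_sig (A i)).

Lemma DS_is_sum (d mu : nat) (A : nat -> digit mu) :
  (1 < d)%nat -> infinite_sum (term (Z.of_nat d) (digit_seq A)) (DS A d).
Proof.
  intro hd.
  assert (hterm : (fun i => INR (proj1_sig (A i)) / INR d ^ i)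
                  = term (Z.of_nat d) (digit_seq A)).
  { extensionality i. unfold term, digit_seq. now rewrite !INR_IZR_INZ. }
  unfold DS. rewrite hterm. apply epsilon_spec.
  apply (series_converges (Z.of_nat d) ltac:(lia) (Z.of_nat mu)).
  intro i. unfold digit_seq. destruct (A i) as [a ha]. simpl. lia.
Qed.

Lemma DS_difference_tail (d mu : nat) (A B : nat -> digit mu) (n : nat) :
  (1 < d)%nat ->
  Rabs (IZR (Z.of_nat d) ^ n * (DS A d - DS B d)
        - IZR (horner (Z.of_nat d) (fun i => letter_diff (A i, B i)) (S n)))
  <= IZR (Z.of_nat mu) / (IZR (Z.of_nat d) - 1).
Proof.
  intro hd. apply series_tail; [lia | intro i; apply letter_diff_bound |].
  replace (term (Z.of_nat d) (fun i => letter_diff (A i, B i)))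
    with (fun i => term (Z.of_nat d) (digit_seq A) i - term (Z.of_nat d) (digit_seq B) i).
  - apply infinite_sum_minus; apply DS_is_sum; exact hd.
  - extensionality i. unfold term, letter_diff, digit_seq. simpl. rewrite minus_IZR.
    field. apply pow_nonzero. apply not_0_IZR. lia.
Qed.

Theorem corollary12 (d mu : nat) (hd : (1 < d)%nat) (hmu : (0 < mu)%nat) :
  forall r : cmp_rel,
    exists M : Buchi (digit mu * digit mu),
      forall A B : nat -> digit mu,
        buchi_accepts M (fun i => (A i, B i)) <-> cmp_interp r (DS A d) (DS B d).
Proof.
  intro r. exists (comparator d mu r). intros A B.
  rewrite comparator_accepts by exact hd. rewrite cmp_interp_sub.
  apply infinitely_often_eventual.
  destruct (eventual_verdict (Z.of_nat d) (Z.of_nat mu) (Z.of_nat mu) ltac:(lia) ltac:(lia)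
              ltac:(nia) (fun i => letter_diff (A i, B i)) (fun i => letter_diff_bound _)
              (DS A d - DS B d) (fun n => DS_difference_tail d mu A B n hd)) as [N hN].
  exists N. intros k hk. apply cmp_interp_same_sign, hN, hk.
Qed.
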